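(* There exist a path-connected topological space $Y$ and points $m,l\in Y$ such that, for the starting points $m$ (man) and $l$ (lion), the man has a strategy in $Y$ and the lion does not have a strategy in $Y$.
   Context: For a topological space $X$ and $x\in X$, let $P_x(X)$ be the set of continuous maps $\gamma:[0,+\infty)\to X$ with $\gamma(0)=x$. For $\gamma\in P_x(X)$ and $t\ge 0$, write $\gamma_{<t}=\gamma|_{[0,t)}$ and $\gamma_{\le t}=\gamma|_{[0,t]}$. Given starting points $m$ (man) and $l$ (lion) in $X$: a strategy for the man is a function $S:P_l(X)\to P_m(X)$ such that (i) $S(\beta)(t)\neq\beta(t)$ for all $\beta\in P_l(X)$ and $t\ge0$, and (ii) whenever $\beta,\beta'\in P_l(X)$ and $t\ge0$ satisfy $\beta_{<t}=\beta'_{<t}$, then $S(\beta)_{\le t}=S(\beta')_{\le t}$. A strategy for the lion is a function $S:P_m(X)\to P_l(X)$ such that (i) for each $\alpha\in P_m(X)$ there exists $t\ge 0$ with $S(\alpha)(t)=\alpha(t)$, and (ii) whenever $\alpha,\alpha'\in P_m(X)$ and $t\ge0$ satisfy $\alpha_{<t}=\alpha'_{<t}$, then $S(\alpha)_{\le t}=S(\alpha')_{\le t}$. The Axiom of Choice is assumed. *)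

From HB Require Import structures.
From mathcomp Require Import all_boot all_order all_algebra.
From mathcomp Require Import all_classical all_reals topology normedtype.
Set Implicit Arguments. Unset Strict Implicit. Unset Printing Implicit Defensive.
Import Order.TTheory GRing.Theory Num.Theory numFieldNormedType.Exports.
Local Open Scope ring_scope.
Local Open Scope classical_set_scope.

Definition path_connected_space (R : realType) (Y : topologicalType) : Prop :=
  forall x y : Y, exists f : R -> Y,
    {within [set x : R | 0 <= x <= 1], continuous f} /\ f 0 = x /\ f 1 = y.

(* P_x(X): continuous maps [0,+oo) -> X starting at x.  They are represented
   as total functions R -> X of which only the restriction to [0,+oo) matters. *)
Definition in_P (R : realType) (X : topologicalType) (x : X) (g : R -> X) : Prop :=
  {within [set s : R | 0 <= s], continuous g} /\ g 0 = x.

Definition nonanticipating (R : realType) (X : topologicalType) (p : X)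
  (S : (R -> X) -> (R -> X)) : Prop :=
  forall (b b' : R -> X) (t : R), in_P p b -> in_P p b' -> 0 <= t ->
    (forall s, 0 <= s -> s < t -> b s = b' s) ->
    forall s, 0 <= s -> s <= t -> S b s = S b' s.

Definition man_strategy (R : realType) (X : topologicalType) (m l : X)
  (S : (R -> X) -> (R -> X)) : Prop :=
  (forall b, in_P l b -> in_P m (S b)) /\
  (forall b, in_P l b -> forall t : R, 0 <= t -> S b t <> b t) /\
  nonanticipating l S.

Definition lion_strategy (R : realType) (X : topologicalType) (m l : X)
  (S : (R -> X) -> (R -> X)) : Prop :=
  (forall a, in_P m a -> in_P l (S a)) /\
  (forall a, in_P m a -> exists t : R, 0 <= t /\ S a t = a t) /\
  nonanticipating m S.

Definition man_has_strategy (R : realType) (X : topologicalType) (m l : X) : Prop :=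
  exists S : (R -> X) -> (R -> X), man_strategy m l S.

Definition lion_has_strategy (R : realType) (X : topologicalType) (m l : X) : Prop :=
  exists S : (R -> X) -> (R -> X), lion_strategy m l S.

From HB Require Import structures.
From mathcomp Require Import all_boot all_order all_algebra.
From mathcomp Require Import all_classical all_reals topology normedtype.
From mathcomp Require Import lra.
Set Implicit Arguments. Unset Strict Implicit. Unset Printing Implicit Defensive.
Import Order.TTheory GRing.Theory Num.Theory numFieldNormedType.Exports.
Local Open Scope ring_scope.
Local Open Scope classical_set_scope.

(* Y is a real tree branching in two at every height [x >= 0], whose points
   moreover record the direction in which they may be left upwards.
   The man escapes by keeping one unit above the lion's height on a fixed
   branch.  Against a lion strategy, let the man climb at unit speed: at every
   moment he may turn away from the direction recorded by the lion's current
   position, which keeps the two apart for a while.  By Zorn's lemma there is a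
   maximal run on which the lion has not caught him (chains are bounded since
   the lion must catch the man on the glued run at a finite time), and such a
   run could be extended. *)

(* [Tree x s] sits at height [x] on the branch given by [s] on [[0, x)], and
   [s x] is its upward direction; the values of [s] above [x] are invisible to
   the topology, and below height [0] routes are irrelevant. *)
Record tree (R : realType) := Tree { height : R ; route : R -> bool }.
HB.instance Definition _ (R : realType) := gen_eqMixin (tree R).
HB.instance Definition _ (R : realType) := gen_choiceMixin (tree R).

Definition agree_upto (R : realType) (s t : R -> bool) (u : R) :=
  forall v, 0 <= v -> v < u -> s v = t v.

(* When the routes of [p] and [q] split at height [u], their tree distance is
   [height p + height q - 2 * u]. *)
Definition tree_close (R : realType) (e : R) (p q : tree R) :=
  exists u, [/\ u <= height p, u <= height q, agree_upto (route p) (route q) u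
    & height p + height q - 2 * u < e].

Definition keeps_direction (R : realType) (p q : tree R) :=
  0 < height p -> height p <= height q ->
  agree_upto (route p) (route q) (height p) -> route p (height p) = route q (height p).

Definition tball (R : realType) (e : R) (p : tree R) : set (tree R) :=
  [set q | tree_close e p q /\ keeps_direction p q].

Definition tree_open (R : realType) (A : set (tree R)) :=
  forall p, A p -> exists2 e, 0 < e & tball e p `<=` A.

Lemma tree_close_le (R : realType) (d e : R) p q :
  d <= e -> tree_close d p q -> tree_close e p q.
Proof. by move=> de [u [pu qu agu dpq]]; exists u; split=> //; apply: lt_le_trans de. Qed.

Lemma tball_le (R : realType) (d e : R) p : d <= e -> tball d p `<=` tball e p.
Proof. by move=> de q [/(tree_close_le de) cpq kpq]. Qed.

Lemma tree_openT (R : realType) : tree_open (@setT (tree R)).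
Proof. by move=> p _; exists 1. Qed.

Lemma tree_openI (R : realType) : setI_closed (@tree_open R).
Proof.
move=> A B oA oB p [/oA [d d0 dA] /oB [e e0 eB]].
exists (Num.min d e); first by rewrite lt_min d0 e0.
by move=> q Bq; split; [apply/dA/(tball_le _ Bq) | apply/eB/(tball_le _ Bq)];
  rewrite ge_min lexx ?orbT.
Qed.

Lemma tree_open_bigcup (R : realType) (I : Type) (f : I -> set (tree R)) :
  (forall i, tree_open (f i)) -> tree_open (\bigcup_i f i).
Proof.
move=> fo p [i _ /fo [e e0 ef]].
by exists e => // q /ef fq; exists i.
Qed.

HB.instance Definition _ (R : realType) :=
  isOpenTopological.Build (tree R) (@tree_openT R) (@tree_openI R) (@tree_open_bigcup R).

Section Tree.
Variable R : realType.
Implicit Types (d e : R) (p q r : tree R).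

Lemma tree_close_trans d e p q r :
  tree_close d p q -> tree_close e q r -> tree_close (d + e) p r.
Proof.
move=> [u [up uq agu dpq]] [v [vq vr agv dqr]].
exists (Num.min u v); split.
- by rewrite ge_min up.
- by rewrite ge_min vr orbT.
- move=> w w0; rewrite lt_min => /andP[wu wv].
  by rewrite (agu w w0 wu) (agv w w0 wv).
- by have [uv|vu] := leP u v; lra.
Qed.

Lemma tree_close_slack e p q : tree_close e p q -> exists2 d, 0 < d & tree_close (e - d) p q.
Proof.
move=> [u [up uq agu dpq]]; exists ((e - (height p + height q - 2 * u)) / 2); first lra.
by exists u; split=> //; lra.
Qed.

Lemma tree_close_height e p q : tree_close e p q -> `|height p - height q| < e.
Proof. by move=> [u [up uq _ dpq]]; rewrite ltr_norml; apply/andP; split; lra. Qed.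

Lemma tree_close_agree e p q :
  tree_close e p q -> agree_upto (route p) (route q) (height p - e).
Proof. by move=> [u [up uq agu dpq]] v v0 ve; apply: agu; lra. Qed.

Lemma keeps_direction_near p q :
  keeps_direction p q -> exists2 d, 0 < d & forall r, tball d q r -> keeps_direction p r.
Proof.
move=> kpq; have [qp|pq|pq] := ltgtP (height q) (height p).
- exists (height p - height q); first lra.
  move=> r [/tree_close_height + _] _ pr; rewrite ltr_norml => /andP[]; lra.
- exists ((height q - height p) / 2); first lra.
  move=> r [/tree_close_agree agqr _] p0 pr agpr.
  have agpq : agree_upto (route p) (route q) (height p).
    by move=> v v0 vp; rewrite agpr // agqr //; lra.
  by rewrite kpq //; [apply: agqr|]; lra.
- have [agpq|] := pselect (agree_upto (route p) (route q) (height p)).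
    exists 1 => // r [_ kqr] p0 pr agpr.
    have agqr : agree_upto (route q) (route r) (height q).
      by move=> v v0; rewrite pq => vp; rewrite -agpq // agpr.
    by rewrite kpq ?pq // -pq kqr // pq.
  move=> /existsNP [c /not_implyP [c0 /not_implyP [cp npqc]]].
  exists ((height p - c) / 2); first lra.
  move=> r [/tree_close_agree agqr _] _ _ agpr; exfalso; apply: npqc.
  by rewrite agpr // agqr //; lra.
Qed.

Lemma tball_open_subball e p q :
  tball e p q -> exists2 d, 0 < d & tball d q `<=` tball e p.
Proof.
move=> [/tree_close_slack [d1 d10 cpq] /keeps_direction_near [d2 d20 kpr]].
exists (Num.min d1 d2); first by rewrite lt_min d10 d20.
move=> r qr; split; last by apply/kpr/(tball_le _ qr); rewrite ge_min lexx orbT.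
have [cqr _] := qr; apply: (tree_close_le _ (tree_close_trans cpq cqr)).
have : Num.min d1 d2 <= d1 by rewrite ge_min lexx.
lra.
Qed.

Lemma open_tball e p : open (tball e p).
Proof. by move=> q /tball_open_subball. Qed.

Lemma tball_center e p : 0 < e -> tball e p p.
Proof. by move=> e0; split=> //; exists (height p); split=> //; lra. Qed.

Lemma nbhs_tballP p (A : set (tree R)) :
  nbhs p A <-> exists2 e, 0 < e & tball e p `<=` A.
Proof.
split=> [[B [oB Bp BA]]|[e e0 eA]].
  by have [e e0 eB] := oB p Bp; exists e => // q /eB /BA.
by exists (tball e p); split; [exact: open_tball | exact: tball_center |].
Qed.

Lemma within_continuous_tballP (A : set R) (f : R -> tree R) :
  {within A, continuous f} <->
  forall t, A t -> forall e, 0 < e ->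
    exists2 d, 0 < d & forall s, A s -> `|t - s| < d -> tball e (f t) (f s).
Proof.
split=> [fc t At e e0|fP].
  have /(fc t) : nbhs (f t) (tball e (f t)) by apply/nbhs_tballP; exists e.
  rewrite /= /nbhs /= -(nbhs_subspace_in At) => /nbhs_ballP [d d0 hd].
  by exists d => // s As ts; apply: hd.
rewrite continuous_subspace_in => t; rewrite inE => At U /= /nbhs_tballP [e e0 eU].
have [d d0 hd] := fP t At e e0.
rewrite /nbhs /= -(nbhs_subspace_in At).
by apply/nbhs_ballP; exists d => // s /= ts As; apply/eU/hd.
Qed.

Lemma within_continuous_height (A : set R) (f : R -> tree R) t :
  {within A, continuous f} -> A t -> forall e, 0 < e ->
  exists2 d, 0 < d & forall s, A s -> `|t - s| < d -> `|height (f t) - height (f s)| < e.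
Proof.
move=> /within_continuous_tballP fc At e e0; have [d d0 hd] := fc t At e e0.
by exists d => // s As ts; have [/tree_close_height] := hd s As ts.
Qed.

Lemma height_continuous_left (b b' : R -> tree R) t :
  {within [set s | 0 <= s], continuous b} -> {within [set s | 0 <= s], continuous b'} ->
  0 < t -> (forall s, 0 <= s -> s < t -> b s = b' s) -> height (b t) = height (b' t).
Proof.
move=> bc b'c t0 bb'; apply/eqP; rewrite -subr_eq0 -normr_le0.
apply/ler_addgt0Pr => e e0; rewrite add0r.
have e20 : 0 < e / 2 by rewrite divr_gt0.
have [d1 d10 h1] := within_continuous_height bc (ltW t0) e20.
have [d2 d20 h2] := within_continuous_height b'c (ltW t0) e20.
pose m := Num.min d1 (Num.min d2 t).
have [m1 m2 m3] : [/\ m <= d1, m <= d2 & m <= t] by rewrite !ge_min !lexx !orbT.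
have m0 : 0 < m by rewrite !lt_min d10 d20 t0.
pose s := t - m / 2.
have [s0 st ts] : [/\ 0 <= s, s < t & `|t - s| = m / 2].
  by split; rewrite /s; [lra | lra | rewrite opprB addrC subrK ger0_norm //; lra].
have := h1 s s0; have := h2 s s0; rewrite ts distrC -(bb' s s0 st).
have := ler_distD (height (b s)) (height (b t)) (height (b' t)); lra.
Qed.

Lemma tree_close_intro e p q :
  agree_upto (route p) (route q) (Num.min (height p) (height q)) ->
  `|height p - height q| < e -> tree_close e p q.
Proof.
move=> ag; rewrite ltr_norml => /andP[h1 h2].
exists (Num.min (height p) (height q)); split=> //; rewrite ?ge_min ?lexx ?orbT //.
by have [|] := leP (height p) (height q); lra.
Qed.

Lemma tball_same_route e p q :
  route p = route q -> `|height p - height q| < e -> tball e p q.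
Proof.
move=> pq pqe; split=> [|_ _ _]; last by rewrite pq.
by apply: tree_close_intro => // v _ _; rewrite pq.
Qed.

Lemma tball_below0 e p q :
  height p < 0 -> height q < 0 -> `|height p - height q| < e -> tball e p q.
Proof.
move=> p0 q0 pqe; split=> [|pos]; last by exfalso; lra.
apply: tree_close_intro => // v v0; rewrite lt_min => /andP[vp _]; lra.
Qed.

Definition same_place (p q : tree R) :=
  [/\ height p = height q, agree_upto (route p) (route q) (height p)
    & 0 < height p -> route p (height p) = route q (height p)].

Lemma tree_path_connected : path_connected_space R (tree R).
Proof.
move=> [x s] [y t].
pose K := 4 * (x ^+ 2 + y ^+ 2 + 1).
pose g u := x + u * (y - x) - K * (u * (1 - u)).
have gP (u e : R) : 0 < e ->
  exists2 d : R, 0 < d & forall v, `|u - v| < d -> `|g u - g v| < e.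
  have gc : {for u, continuous g}.
    by repeat first [exact: cvg_cst | exact: cvg_id | apply: cvgB | apply: cvgD | apply: cvgM].
  by move=> e0; have /cvgrPdist_lt /(_ e e0) /nbhs_ballP [d d0 hd] := gc; exists d.
(* Branches are switched below height [0]. *)
have g_half : g (1 / 2) < 0.
  have := sqr_ge0 (x - 1 / 4); have := sqr_ge0 (y - 1 / 4); rewrite /g /K; nra.
exists (fun u => Tree (g u) (if u < 1 / 2 then s else t)); split; last first.
  by rewrite /g ifT ?ifN; [split; congr Tree; lra | rewrite -leNgt | ]; lra.
apply/within_continuous_tballP => u _ e e0.
have [hu|hu|->] := ltgtP u (1 / 2).
- have [d d0 gd] := gP u e e0.
  exists (Num.min d (1 / 2 - u)); first by rewrite lt_min d0 subr_gt0.
  move=> v _; rewrite lt_min => /andP[/gd guv]; rewrite ltr_norml => /andP[uv _].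
  by apply: tball_same_route => //=; rewrite ifT //; lra.
- have [d d0 gd] := gP u e e0.
  exists (Num.min d (u - 1 / 2)); first by rewrite lt_min d0 subr_gt0.
  move=> v _; rewrite lt_min => /andP[/gd guv]; rewrite ltr_norml => /andP[_ uv].
  by apply: tball_same_route => //=; rewrite ifN // -leNgt; lra.
- have e'0 : 0 < Num.min e (- g (1 / 2)) by rewrite lt_min e0 oppr_gt0.
  have [d d0 gd] := gP (1 / 2) _ e'0; exists d => // v _ /gd.
  rewrite lt_min => /andP[ge]; rewrite ltr_norml => /andP[gv _].
  by apply: tball_below0 => //=; lra.
Qed.

End Tree.

Section Game.
Variable R : realType.
Implicit Types (b : R -> tree R) (sg : R -> bool).

Definition man_start : tree R := Tree 1 (fun _ => false).
Definition lion_start : tree R := Tree 0 (fun _ => false).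

Definition stay_above b : R -> tree R := fun t => Tree (height (b t) + 1) (fun _ => false).

Lemma stay_above_strategy : man_strategy man_start lion_start stay_above.
Proof.
split; [|split].
- move=> b [bc b0]; split; last by rewrite /stay_above b0 /= add0r.
  apply/within_continuous_tballP => t At e e0.
  have [d d0 hd] := within_continuous_height bc At e0.
  exists d => // s As ts; apply: tball_same_route => //=.
  by rewrite opprD addrACA subrr addr0; apply: hd.
- by move=> b _ t _ /(congr1 (@height R)) /=; lra.
move=> b b' t [bc b0] [b'c b'0] t0 bb' s s0 st; rewrite /stay_above.
have [/bb'-> //|ts] := ltP s t.
have -> : s = t by apply/eqP; rewrite eq_le st ts.
have [->|tpos] := eqVneq t 0; first by rewrite b0 b'0.
by rewrite (@height_continuous_left _ b b') // lt_neqAle eq_sym tpos.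
Qed.

(* Truncating the route makes [climb sg t] depend on [sg] only on [(1, 1 + t]]. *)
Definition climb sg : R -> tree R :=
  fun t => Tree (1 + t) (fun v => (1 < v <= 1 + t) && sg v).

Lemma climb_in_P sg : in_P man_start (climb sg).
Proof.
split.
  apply/within_continuous_tballP => t _ e e0; exists e => // s _ ts; split.
    apply: tree_close_intro; last by rewrite /= opprD addrACA subrr add0r.
    by move=> v _; rewrite lt_min /= => /andP[vt vs]; rewrite !(ltW vt) !(ltW vs).
  by move=> /= _ ts' _; rewrite lexx ts'.
rewrite /climb addr0; congr Tree; apply/funext => v.
by case: (ltP 1 v) => //= /lt_geF ->.
Qed.

Lemma climb_eq sg1 sg2 u t :
  agree_upto sg1 sg2 u -> 1 + t < u -> climb sg1 t = climb sg2 t.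
Proof.
move=> ag tu; congr Tree; apply/funext => v.
by case: (ltP 1 v) => //= v1; case: leP => //= vt; apply: ag; lra.
Qed.

Lemma route_climb_le sg t s v :
  v <= 1 + t -> t <= s -> route (climb sg s) v = route (climb sg t) v.
Proof. by move=> vt ts /=; rewrite vt (le_trans vt) // lerD2l. Qed.

Lemma climb_avoids sg T (p : tree R) :
  0 <= T -> ~ same_place p (climb sg T) ->
  exists2 e, 0 < e & forall s, T <= s -> s < T + e -> ~ tball e p (climb sg s).
Proof.
move=> T0 nsame.
have [hp|hp|hp] := ltgtP (height p) (1 + T).
- exists ((1 + T - height p) / 2); first lra.
  move=> s Ts sT [/tree_close_height]; rewrite ltr_norml /= => /andP[]; lra.
- exists ((height p - 1 - T) / 2); first lra.
  move=> s Ts sT [/tree_close_height]; rewrite ltr_norml /= => /andP[]; lra.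
have [ag|] := pselect (agree_upto (route p) (route (climb sg T)) (height p)); last first.
  move=> /existsNP [c /not_implyP [c0 /not_implyP [cp npc]]].
  exists ((height p - c) / 2); first lra.
  move=> s Ts sT [/tree_close_agree agps _]; apply: npc.
  by rewrite agps ?(route_climb_le _ _ Ts) //; lra.
exists 1 => // s Ts _ [_ kps]; apply: nsame; split=> // p0.
have agps : agree_upto (route p) (route (climb sg s)) (height p).
  by move=> v v0 vp; rewrite ag // (route_climb_le _ _ Ts) //; lra.
have hps : height p <= height (climb sg s) by rewrite hp lerD2l.
by rewrite (kps p0 hps agps) hp (route_climb_le _ _ Ts).
Qed.

Section Lion.
Variable L : (R -> tree R) -> R -> tree R.
Hypothesis HL : lion_strategy man_start lion_start L.

Lemma lion_climb_eq sg1 sg2 t :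
  0 <= t -> agree_upto sg1 sg2 (1 + t) -> L (climb sg1) t = L (climb sg2) t.
Proof.
have [_ [_ nonant]] := HL; move=> t0 ag.
apply: (nonant _ _ t (climb_in_P sg1) (climb_in_P sg2)) => // s s0 st.
by apply: (climb_eq ag); lra.
Qed.

Definition escapes (T : R) sg :=
  0 <= T /\ forall s, 0 <= s -> s < T -> L (climb sg) s <> climb sg s.

Lemma escapes_agree T sg1 sg2 : agree_upto sg1 sg2 (1 + T) -> escapes T sg1 ->
  forall s, 0 <= s -> s < T -> L (climb sg2) s <> climb sg2 s.
Proof.
move=> ag [_ esc] s s0 sT.
have ags : agree_upto sg1 sg2 (1 + s) by move=> v v0 vs; apply: ag; lra.
by rewrite -(lion_climb_eq s0 ags) -(climb_eq ag); [exact: esc | lra].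
Qed.

Record run := Run {
  horizon : R ;
  choice : R -> bool ;
  run_escapes : escapes horizon choice }.

Definition extends (a b : run) : bool :=
  `[< horizon a <= horizon b /\ agree_upto (choice a) (choice b) (1 + horizon a) >].

Lemma extends_refl : reflexive extends.
Proof. by move=> a; apply/asboolP. Qed.

Lemma extends_trans (a b c : run) : extends a b -> extends b c -> extends a c.
Proof.
move=> /asboolP [ab agab] /asboolP [bc agbc]; apply/asboolP.
split=> [|v v0 va]; first exact: le_trans bc.
by rewrite agab // agbc //; lra.
Qed.

Lemma chain_route (A : set run) : total_on A extends ->
  exists sg, forall a, A a -> agree_upto (choice a) sg (1 + horizon a).
Proof.
move=> tot.
pose sg v := if pselect (exists a, A a /\ v < 1 + horizon a) is left ex
  then choice (projT1 (cid ex)) v else false.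
exists sg => a Aa v v0 va; rewrite /sg; case: pselect => [ex|]; last first.
  by move=> nex; exfalso; apply: nex; exists a.
case: cid => a' [Aa' va'] /=.
by case: (tot a a' Aa Aa') => /asboolP [_ ag]; rewrite ag.
Qed.

Lemma chain_bounded (A : set run) : total_on A extends ->
  exists c, forall a, A a -> extends a c.
Proof.
move=> /chain_route [sg agA].
have [_ [catch _]] := HL; have [t [t0 caught]] := catch _ (climb_in_P sg).
have le_t a : A a -> horizon a <= t.
  move=> Aa; rewrite leNgt; apply/negP => ta.
  exact: (escapes_agree (agA a Aa) (run_escapes a) t0 ta caught).
pose E := 0 |` (horizon @` A).
have supE : has_sup E.
  by split; [exists 0; left | exists t => _ [-> | [a Aa <-]] //; exact: le_t].
have le_sup x : E x -> x <= sup E by exact: sup_upper_bound.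
have sup0 : 0 <= sup E by apply: le_sup; left.
have esc : escapes (sup E) sg.
  split=> // s s0 s_sup.
  have ep : 0 < sup E - s by rewrite subr_gt0.
  have [_ [-> | [a Aa <-]] xs] := sup_adherent ep supE.
    by move: xs; rewrite opprB addrC subrK ltNge s0.
  by apply: (escapes_agree (agA a Aa) (run_escapes a)) => //; lra.
exists (Run esc) => a Aa; apply/asboolP; split; last exact: agA.
by apply: le_sup; right; exists a.
Qed.

Lemma climb_turns_away T sg : 0 <= T ->
  exists sg', agree_upto sg sg' (1 + T) /\ ~ same_place (L (climb sg') T) (climb sg' T).
Proof.
move=> T0; pose p := L (climb sg) T.
(* At height [1 + T] the man turns away from the lion's upward direction. *)
pose sg' v := if v < 1 + T then sg v else ~~ route p (1 + T).
have ag : agree_upto sg sg' (1 + T) by move=> v _ vT; rewrite /sg' vT.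
exists sg'; split=> //; rewrite -(lion_climb_eq T0 ag) -/p => -[hp _ dir].
have [T00|Tn0] := eqVneq T 0.
  have [/(_ _ (climb_in_P sg)) [_ p0] _] := HL.
  by move: hp; rewrite /p T00 p0 /=; lra.
have Tpos : 0 < T by rewrite lt_neqAle eq_sym Tn0 T0.
have pos : 0 < 1 + T by lra.
move: dir; rewrite hp /= /sg' ltxx lexx ltrDl Tpos /=.
by move=> /(_ pos); case: (route p (1 + T)).
Qed.

Lemma escapes_extend T sg : escapes T sg ->
  exists T' sg', [/\ T < T', escapes T' sg' & agree_upto sg sg' (1 + T)].
Proof.
move=> [T0 esc].
have [sg' [ag sep]] := climb_turns_away sg T0.
have [e e0 avoid] := climb_avoids T0 sep.
have [/(_ _ (climb_in_P sg')) [lc _] _] := HL.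
have [d d0 near] := (within_continuous_tballP _ _).1 lc T T0 e e0.
have m0 : 0 < Num.min d e by rewrite lt_min d0 e0.
have [md me] : Num.min d e <= d /\ Num.min d e <= e by rewrite !ge_min !lexx !orbT.
exists (T + Num.min d e), sg'; split=> //; first lra.
split=> [|s s0 sT]; first lra.
have [sT'|Ts] := ltP s T; first exact: (escapes_agree ag (conj T0 esc) s0 sT').
move=> caught; apply: (avoid s Ts); first lra.
by rewrite -caught; apply: near => //; rewrite ltr_norml; apply/andP; split; lra.
Qed.

Lemma no_premaximal_run a : ~ premaximal extends a.
Proof.
move=> amax; have [T' [sg' [aT' esc ag]]] := escapes_extend (run_escapes a).
have /amax /asboolP [/= T'a _] : extends a (Run esc).
  by apply/asboolP; split=> /=; [lra | exact: ag].
lra.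
Qed.

End Lion.

Lemma no_lion_strategy : ~ lion_has_strategy R man_start lion_start.
Proof.
move=> [L HL].
have esc0 : escapes L 0 (fun _ => false).
  by split=> // s s0 /(le_lt_trans s0); rewrite ltxx.
have [a amax] := ZL_preorder (Run esc0) (@extends_refl L) (@extends_trans L) (chain_bounded HL).
exact: (no_premaximal_run HL amax).
Qed.

End Game.

Theorem mainTheorem7 (R : realType) :
  exists (Y : topologicalType) (m l : Y),
    path_connected_space R Y /\
    man_has_strategy R m l /\ ~ lion_has_strategy R m l.
Proof.
exists (tree R), (man_start R), (lion_start R); split; first exact: tree_path_connected.
by split; [exists (@stay_above R); exact: stay_above_strategy | exact: no_lion_strategy].
Qed.
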